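(* Let $\mathbf{A}:\mathbb{R}^{2\times 2}\to\mathbb{R}^2$ be the Cauchy–Riemann map $\mathbf{A}:X=(X_{11}+X_{22},\,X_{21}-X_{12})$. Fix constants $b,c>0$ with $b+c<1$ and $\sqrt2\,c+b>1$, and a unit vector $\eta\in\mathbb{R}^2$. Define $F(x,X):=\mathbf{A}:X+\eta\big(b|X|+c|\mathbf{A}:X|\big)$ for $x\in\mathbb{R}^2$, $X\in\mathbb{R}^{2\times2}$. Then for all $X,Y\in\mathbb{R}^{2\times2}$, $$\big|[F(x,X+Y)-F(x,X)]-\mathbf{A}:Y\big|\leq b\,\nu(\mathbf{A})|Y|+c|\mathbf{A}:Y|,$$ so $F$ satisfies the AK-Condition with respect to $\mathbf{A}$ with $\alpha\equiv1$, $\beta=b$, $\gamma=c$; but there is no $\beta\in(0,1)$ for which $\big|[F(x,X+Y)-F(x,X)]-\mathbf{A}:Y\big|\leq\beta\,\nu(\mathbf{A})|Y|$ holds for all $X,Y$, i.e. $F$ does not satisfy the K-Condition with respect to $\mathbf{A}$.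
   Context: For $X\in\mathbb{R}^{2\times2}$, $|X|$ is the Frobenius norm; $\nu(\mathbf{A}):=\min_{|\eta|=|a|=1}|\mathbf{A}:\eta\otimes a|$, where $\eta\otimes a$ is the matrix with entries $\eta_\beta a_j$ (for the Cauchy–Riemann map, $\nu(\mathbf{A})=1$). AK-Condition: $F$ satisfies it with respect to $\mathbf{A}$ if there exist a positive function $\alpha$ with $\alpha,1/\alpha\in L^\infty$ and $\beta,\gamma>0$ with $\beta+\gamma<1$ such that for all $X,Y$ and a.e. $x$: $\big|\alpha(x)[F(x,X+Y)-F(x,Y)]-\mathbf{A}:X\big|\leq\beta\,\nu(\mathbf{A})|X|+\gamma|\mathbf{A}:X|$. K-Condition: $F$ satisfies it with respect to $\mathbf{A}$ if there exists $0<\beta<1$ such that for all $X,Y$ and a.e. $x$: $\big|[F(x,X+Y)-F(x,X)]-\mathbf{A}:Y\big|\leq\beta\,\nu(\mathbf{A})|Y|$. *)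

From Stdlib Require Import Reals Lra ClassicalEpsilon.
Open Scope R_scope.

Definition R2 : Type := (R * R)%type.
Record M2 : Type := mkM2 { m11 : R; m12 : R; m21 : R; m22 : R }.

Definition vadd (u v : R2) : R2 := (fst u + fst v, snd u + snd v).
Definition vsub (u v : R2) : R2 := (fst u - fst v, snd u - snd v).
Definition vscale (t : R) (u : R2) : R2 := (t * fst u, t * snd u).
Definition vnorm (u : R2) : R := sqrt (fst u ^ 2 + snd u ^ 2).

Definition madd (X Y : M2) : M2 :=
  mkM2 (m11 X + m11 Y) (m12 X + m12 Y) (m21 X + m21 Y) (m22 X + m22 Y).

Definition frob (X : M2) : R :=
  sqrt (m11 X ^ 2 + m12 X ^ 2 + m21 X ^ 2 + m22 X ^ 2).

Definition tens (eta a : R2) : M2 :=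
  mkM2 (fst eta * fst a) (fst eta * snd a) (snd eta * fst a) (snd eta * snd a).

Definition CR (X : M2) : R2 := (m11 X + m22 X, m21 X - m12 X).

Definition IsNu (A : M2 -> R2) (m : R) : Prop :=
  (exists eta a : R2, vnorm eta = 1 /\ vnorm a = 1 /\ vnorm (A (tens eta a)) = m) /\
  (forall eta a : R2, vnorm eta = 1 -> vnorm a = 1 -> m <= vnorm (A (tens eta a))).

(* nu(A) := min_{|eta|=|a|=1} |A : eta (x) a| (chosen by classical choice;
   the minimum is unique when it exists). *)
Definition nu (A : M2 -> R2) : R := epsilon (inhabits 0) (fun m => IsNu A m).

(* AK-Condition (with "a.e. x" read as "every x"). *)
Definition AK_cond (F : R2 -> M2 -> R2) (A : M2 -> R2) : Prop :=
  exists (alpha : R2 -> R) (beta gamma : R),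
    (exists M : R, forall x, 0 < alpha x /\ alpha x <= M /\ / alpha x <= M) /\
    0 < beta /\ 0 < gamma /\ beta + gamma < 1 /\
    forall x X Y,
      vnorm (vsub (vscale (alpha x) (vsub (F x (madd X Y)) (F x Y))) (A X))
        <= beta * nu A * frob X + gamma * vnorm (A X).

Definition Fex (b c : R) (eta : R2) (x : R2) (X : M2) : R2 :=
  vadd (CR X) (vscale (b * frob X + c * vnorm (CR X)) eta).

(* The increment F(X+Y) - F(X) - A:Y is the scalar
   b (|X+Y| - |X|) + c (|A:(X+Y)| - |A:X|) times the unit vector eta, so the
   reverse triangle inequality for both norms gives the AK bound, and
   nu(A) = 1 because |A:(eta (x) a)| = |eta| |a|.  At X = 0, Y = I the
   increment has length sqrt 2 b + 2 c = sqrt 2 (b + sqrt 2 c) > sqrt 2 = |I|,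
   which no bound beta |Y| with beta < 1 can dominate. *)

From Stdlib Require Import Reals Lra Psatz ClassicalEpsilon.
Open Scope R_scope.

Lemma sqrt_add_le_of_cauchy_schwarz (A B P : R) :
  0 <= A -> 0 <= B -> P * P <= A * B ->
  sqrt (A + B + 2 * P) <= sqrt A + sqrt B.
Proof.
  intros HA HB Hcs.
  pose proof (sqrt_pos A); pose proof (sqrt_pos B).
  assert (HP : P <= sqrt A * sqrt B).
  { rewrite <- sqrt_mult_alt by lra.
    destruct (Rle_or_lt P 0) as [Hneg | Hpos].
    - pose proof (sqrt_pos (A * B)); lra.
    - rewrite <- (sqrt_square P) by lra; apply sqrt_le_1_alt; lra. }
  rewrite <- (sqrt_square (sqrt A + sqrt B)) by lra.
  apply sqrt_le_1_alt.
  replace ((sqrt A + sqrt B) * (sqrt A + sqrt B))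
    with (sqrt A * sqrt A + sqrt B * sqrt B + 2 * (sqrt A * sqrt B)) by ring.
  rewrite !sqrt_sqrt by lra; lra.
Qed.

Lemma frob_triangle (X Y : M2) : frob (madd X Y) <= frob X + frob Y.
Proof.
  destruct X as [x1 x2 x3 x4], Y as [y1 y2 y3 y4]; unfold frob, madd; cbn [m11 m12 m21 m22].
  replace ((x1 + y1) ^ 2 + (x2 + y2) ^ 2 + (x3 + y3) ^ 2 + (x4 + y4) ^ 2)
    with ((x1 ^ 2 + x2 ^ 2 + x3 ^ 2 + x4 ^ 2) + (y1 ^ 2 + y2 ^ 2 + y3 ^ 2 + y4 ^ 2)
          + 2 * (x1 * y1 + x2 * y2 + x3 * y3 + x4 * y4)) by ring.
  apply sqrt_add_le_of_cauchy_schwarz; try nra.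
  assert (Hlagrange :
    (x1 ^ 2 + x2 ^ 2 + x3 ^ 2 + x4 ^ 2) * (y1 ^ 2 + y2 ^ 2 + y3 ^ 2 + y4 ^ 2)
    - (x1 * y1 + x2 * y2 + x3 * y3 + x4 * y4) * (x1 * y1 + x2 * y2 + x3 * y3 + x4 * y4)
    = (x1 * y2 - x2 * y1) ^ 2 + (x1 * y3 - x3 * y1) ^ 2 + (x1 * y4 - x4 * y1) ^ 2
      + (x2 * y3 - x3 * y2) ^ 2 + (x2 * y4 - x4 * y2) ^ 2 + (x3 * y4 - x4 * y3) ^ 2)
    by ring.
  pose proof (pow2_ge_0 (x1 * y2 - x2 * y1)); pose proof (pow2_ge_0 (x1 * y3 - x3 * y1)).
  pose proof (pow2_ge_0 (x1 * y4 - x4 * y1)); pose proof (pow2_ge_0 (x2 * y3 - x3 * y2)).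
  pose proof (pow2_ge_0 (x2 * y4 - x4 * y2)); pose proof (pow2_ge_0 (x3 * y4 - x4 * y3)).
  lra.
Qed.

Lemma vnorm_triangle (u v : R2) : vnorm (vadd u v) <= vnorm u + vnorm v.
Proof.
  destruct u as [u1 u2], v as [v1 v2]; unfold vnorm, vadd; cbn [fst snd].
  replace ((u1 + v1) ^ 2 + (u2 + v2) ^ 2)
    with ((u1 ^ 2 + u2 ^ 2) + (v1 ^ 2 + v2 ^ 2) + 2 * (u1 * v1 + u2 * v2)) by ring.
  apply sqrt_add_le_of_cauchy_schwarz; try nra.
  assert (Hlagrange :
    (u1 ^ 2 + u2 ^ 2) * (v1 ^ 2 + v2 ^ 2) - (u1 * v1 + u2 * v2) * (u1 * v1 + u2 * v2)
    = (u1 * v2 - u2 * v1) ^ 2) by ring.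
  pose proof (pow2_ge_0 (u1 * v2 - u2 * v1)); lra.
Qed.

Definition mopp (Y : M2) : M2 := mkM2 (- m11 Y) (- m12 Y) (- m21 Y) (- m22 Y).

Lemma frob_reverse_triangle (X Y : M2) : Rabs (frob (madd X Y) - frob X) <= frob Y.
Proof.
  pose proof (frob_triangle X Y).
  pose proof (frob_triangle (madd X Y) (mopp Y)) as Hback.
  replace (madd (madd X Y) (mopp Y)) with X in Hback
    by (destruct X, Y; unfold madd, mopp; simpl; f_equal; ring).
  replace (frob (mopp Y)) with (frob Y) in Hback
    by (destruct Y; unfold frob, mopp; simpl; f_equal; ring).
  apply Rabs_le; lra.
Qed.

Lemma vnorm_reverse_triangle (u v : R2) : Rabs (vnorm (vadd u v) - vnorm u) <= vnorm v.
Proof.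
  pose proof (vnorm_triangle u v).
  pose proof (vnorm_triangle (vadd u v) (vscale (-1) v)) as Hback.
  replace (vadd (vadd u v) (vscale (-1) v)) with u in Hback
    by (destruct u, v; unfold vadd, vscale; simpl; f_equal; ring).
  replace (vnorm (vscale (-1) v)) with (vnorm v) in Hback
    by (destruct v; unfold vnorm, vscale; simpl; f_equal; ring).
  apply Rabs_le; lra.
Qed.

Lemma vnorm_vscale (s : R) (u : R2) : vnorm (vscale s u) = Rabs s * vnorm u.
Proof.
  destruct u as [u1 u2]; unfold vnorm, vscale; cbn [fst snd].
  replace ((s * u1) ^ 2 + (s * u2) ^ 2) with (s * s * (u1 ^ 2 + u2 ^ 2)) by ring.
  rewrite sqrt_mult_alt by nra; rewrite <- sqrt_Rsqr_abs; reflexivity.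
Qed.

Lemma vscale1 (u : R2) : vscale 1 u = u.
Proof. destruct u; unfold vscale; simpl; f_equal; ring. Qed.

Lemma maddC (X Y : M2) : madd X Y = madd Y X.
Proof. destruct X, Y; unfold madd; simpl; f_equal; ring. Qed.

Lemma CR_madd (X Y : M2) : CR (madd X Y) = vadd (CR X) (CR Y).
Proof. destruct X, Y; unfold CR, madd, vadd; simpl; f_equal; ring. Qed.

Lemma vnorm_CR_tens (e a : R2) : vnorm (CR (tens e a)) = vnorm e * vnorm a.
Proof.
  destruct e as [e1 e2], a as [a1 a2]; unfold vnorm, CR, tens; cbn [fst snd m11 m12 m21 m22].
  replace ((e1 * a1 + e2 * a2) ^ 2 + (e2 * a1 - e1 * a2) ^ 2)
    with ((e1 ^ 2 + e2 ^ 2) * (a1 ^ 2 + a2 ^ 2)) by ring.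
  apply sqrt_mult_alt; nra.
Qed.

Lemma nu_CR : nu CR = 1.
Proof.
  assert (Hunit : forall e a, vnorm e = 1 -> vnorm a = 1 -> vnorm (CR (tens e a)) = 1).
  { intros e a He Ha; rewrite vnorm_CR_tens, He, Ha; ring. }
  assert (He1 : vnorm (1, 0) = 1).
  { unfold vnorm; cbn [fst snd]; replace (1 ^ 2 + 0 ^ 2) with 1 by ring; apply sqrt_1. }
  assert (Hnu : IsNu CR 1).
  { split.
    - exists (1, 0), (1, 0); auto.
    - intros e a He Ha; rewrite Hunit by assumption; lra. }
  unfold nu.
  destruct (epsilon_spec (inhabits 0) (fun m => IsNu CR m) (ex_intro _ 1 Hnu))
    as [[e [a [He [Ha <-]]]] _].
  exact (Hunit e a He Ha).
Qed.

Definition mzero : M2 := mkM2 0 0 0 0.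
Definition mid : M2 := mkM2 1 0 0 1.

Lemma frob_mid : frob mid = sqrt 2.
Proof. unfold frob, mid; cbn [m11 m12 m21 m22]; f_equal; ring. Qed.

Section Fex_increment.

Variables (b c : R) (eta x : R2).
Hypotheses (hb : 0 < b) (hc : 0 < c) (heta : vnorm eta = 1).

Definition Fex_increment (X Y : M2) : R2 :=
  vsub (vsub (Fex b c eta x (madd X Y)) (Fex b c eta x X)) (CR Y).

Lemma Fex_incrementE (X Y : M2) :
  Fex_increment X Y =
  vscale (b * (frob (madd X Y) - frob X) + c * (vnorm (CR (madd X Y)) - vnorm (CR X))) eta.
Proof.
  unfold Fex_increment, Fex; rewrite CR_madd.
  destruct X, Y, eta; unfold CR, vadd, vsub, vscale; simpl; f_equal; ring.
Qed.

Lemma vnorm_Fex_increment_le (X Y : M2) :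
  vnorm (Fex_increment X Y) <= b * nu CR * frob Y + c * vnorm (CR Y).
Proof.
  rewrite Fex_incrementE, vnorm_vscale, heta, nu_CR, !Rmult_1_r, CR_madd.
  pose proof (frob_reverse_triangle X Y).
  pose proof (vnorm_reverse_triangle (CR X) (CR Y)).
  eapply Rle_trans; [apply Rabs_triang |].
  rewrite !Rabs_mult, (Rabs_right b), (Rabs_right c) by lra.
  apply Rplus_le_compat; apply Rmult_le_compat_l; lra.
Qed.

Lemma vnorm_Fex_increment_mid : vnorm (Fex_increment mzero mid) = b * sqrt 2 + 2 * c.
Proof.
  rewrite Fex_incrementE, vnorm_vscale, heta, Rmult_1_r.
  replace (madd mzero mid) with mid
    by (unfold madd, mzero, mid; cbn [m11 m12 m21 m22]; f_equal; ring).
  unfold frob, vnorm, CR, mzero, mid; cbn [fst snd m11 m12 m21 m22].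
  replace (1 ^ 2 + 0 ^ 2 + 0 ^ 2 + 1 ^ 2) with 2 by ring.
  replace (0 ^ 2 + 0 ^ 2 + 0 ^ 2 + 0 ^ 2) with 0 by ring.
  replace ((1 + 1) ^ 2 + (0 - 0) ^ 2) with (2 * 2) by ring.
  replace ((0 + 0) ^ 2 + (0 - 0) ^ 2) with 0 by ring.
  rewrite sqrt_0, sqrt_square by lra.
  pose proof (sqrt_pos 2).
  rewrite Rabs_right; [ring | nra].
Qed.

End Fex_increment.

Theorem mainTheorem4 (b c : R) (eta : R2)
  (hb : 0 < b) (hc : 0 < c) (hbc : b + c < 1) (hsq : sqrt 2 * c + b > 1)
  (heta : vnorm eta = 1) :
  (forall (x : R2) (X Y : M2),
     vnorm (vsub (vsub (Fex b c eta x (madd X Y)) (Fex b c eta x X)) (CR Y))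
       <= b * nu CR * frob Y + c * vnorm (CR Y)) /\
  AK_cond (Fex b c eta) CR /\
  (forall (x : R2) (beta : R), 0 < beta < 1 ->
     ~ (forall X Y : M2,
          vnorm (vsub (vsub (Fex b c eta x (madd X Y)) (Fex b c eta x X)) (CR Y))
            <= beta * nu CR * frob Y)).
Proof.
  split; [| split].
  - intros x X Y; exact (vnorm_Fex_increment_le b c eta x hb hc heta X Y).
  - exists (fun _ => 1), b, c; split.
    + exists 1; intros; rewrite Rinv_1; lra.
    + do 3 (split; [lra |]).
      intros x X Y; rewrite vscale1, maddC.
      exact (vnorm_Fex_increment_le b c eta x hb hc heta Y X).
  - intros x beta [hbeta0 hbeta1] HK.
    specialize (HK mzero mid); fold (Fex_increment b c eta x mzero mid) in HK.
    rewrite (vnorm_Fex_increment_mid b c eta x hb hc heta), nu_CR, frob_mid in HK.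
    pose proof (sqrt_lt_R0 2 ltac:(lra)).
    pose proof (sqrt_sqrt 2 ltac:(lra)).
    nra.
Qed.
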